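(* Let $X$ be the subshift obtained from the marker construction described in the context, and let $j \in \mathbb{N}$. If $x \in X$ and $x_{[0,l_j)}$ is a word in $\mathcal{C}_j$, then every $k>0$ with $x_{[k,k+l_j)} = x_{[0,l_j)}$ is a multiple of $l_j$. In particular the first return time $R_{l_j}(x) = \inf\{k>0 : x_{[k,k+l_j)} = x_{[0,l_j)}\}$ is a multiple of $l_j$.
   Context: Marker construction. Let $l_1$ be a sufficiently large perfect square and $N_1 = 2^{\sqrt{l_1}}$. Let $\mathcal{C}_1$ be a set of $N_1$ binary words of length $l_1$, each beginning with $001$, such that the word $00$ occurs in each element of $\mathcal{C}_1$ only as its prefix. Inductively, given a set $\mathcal{C}_j$ of $N_j$ distinct words of length $l_j$ with an ordering $\mathcal{C}_j = \{u_1^{(j)},\dots,u_{N_j}^{(j)}\}$, let $P_j = \{2\}\cup\{i^2 : 2 \le i \le \lfloor\sqrt{N_j}\rfloor\}$, and let $\mathcal{C}_{j+1}$ be the set of all words $u^{(j)}_{\pi(1)}u^{(j)}_{\pi(2)}\cdots u^{(j)}_{\pi(N_j)}$ where $\pi$ ranges over permutations of $\{1,\dots,N_j\}$ fixing every element outside $P_j$. Thus $N_{j+1} = (\lfloor\sqrt{N_j}\rfloor)!$ and $l_{j+1} = l_j N_j$. The ordering of $\mathcal{C}_{j+1}$ is arbitrary except that its first element $u^{(j+1)}_1$ is $u_1^{(j)}u_2^{(j)}\cdots u_{N_j}^{(j)}$ (identity permutation). Words $u_i^{(j)}$ with $i\in P_j$ are called permuted, the others unpermuted. $X \subset \{0,1\}^{\mathbb{Z}}$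 is the set of bi-infinite sequences each finite subword of which is a subword of some word in $\bigcup_j \mathcal{C}_j$; it is a strictly ergodic subshift. *)

From mathcomp Require Import all_boot all_order all_algebra all_fingroup.
Set Implicit Arguments. Unset Strict Implicit. Unset Printing Implicit Defensive.
Import GRing.Theory Num.Theory.

Definition subword (x : int -> bool) (a : int) (n : nat) : seq bool :=
  [seq x (a + (i%:Z))%R | i <- iota 0 n].

(* The index set P_j (1-based positions), given N = N_j:
   P = {2} U {i^2 : 2 <= i <= floor(sqrt N)}; note i <= floor(sqrt N) <-> i*i <= N. *)
Definition Pset (N : nat) (m : nat) : Prop :=
  m = 2 \/ exists i, 2 <= i /\ i * i <= N /\ m = i * i.

(* Words of C_{j+1} built from the ordering u = (u_1,...,u_N) of C_j:
   u_{pi(1)} ... u_{pi(N)} for a permutation pi fixing every position outside P.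
   Positions are 0-based in Rocq: ordinal i stands for the 1-based position i+1. *)
Definition next_level (u : seq (seq bool)) (w : seq bool) : Prop :=
  exists pi : {perm 'I_(size u)},
    (forall i : 'I_(size u), ~ Pset (size u) i.+1 -> pi i = i) /\
    w = flatten [seq nth [::] u (pi i) | i <- enum 'I_(size u)].

Definition only_prefix00 (w : seq bool) : Prop :=
  forall i, i.+1 < size w -> nth true w i = false -> nth true w i.+1 = false -> i = 0.

(* [ord j] is the chosen ordering (u_1^{(j)}, ..., u_{N_j}^{(j)}) of C_j, for j >= 1
   (ord 0 is irrelevant).  [marker_construction l1 ord] says that ord is a valid
   run of the marker construction starting from l_1 = l1. *)
Definition marker_construction (l1 : nat) (ord : nat -> seq (seq bool)) : Prop :=
  (exists s, l1 = s * s /\ size (ord 1) = 2 ^ s) /\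
  uniq (ord 1) /\
  (forall w, w \in ord 1 ->
     size w = l1 /\ take 3 w = [:: false; false; true] /\ only_prefix00 w) /\
  (forall j, 1 <= j ->
     uniq (ord j.+1) /\
     (forall w, w \in ord j.+1 <-> next_level (ord j) w) /\
     head [::] (ord j.+1) = flatten (ord j)).

(* The lengths l_j: l_1 = l1, l_{j+1} = l_j * N_j  (value at j = 0 irrelevant). *)
Fixpoint wlen (l1 : nat) (ord : nat -> seq (seq bool)) (j : nat) : nat :=
  match j with
  | 0 => l1
  | 1 => l1
  | j'.+1 => wlen l1 ord j' * size (ord j')
  end.

Definition in_X (ord : nat -> seq (seq bool)) (x : int -> bool) : Prop :=
  forall (a : int) (n : nat),
    exists j, 1 <= j /\ exists w, w \in ord j /\ infix (subword x a n) w.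

From mathcomp Require Import all_boot all_order all_algebra all_fingroup.
From mathcomp Require Import zify.
Set Implicit Arguments. Unset Strict Implicit.

(* Recognizability, by induction on the level i: in a concatenation of level-i
   words, a level-i word occurs only at multiples of l_i.  At level 1 the marker
   001 can only start a word, because 00 occurs inside a word only as its prefix,
   and a 00 across a boundary is followed by the second letter 0 of the next
   word.  At level i+1, position 1 is never permuted, so a level-(i+1) word
   begins with u_1^(i); by induction it sits at some m * l_i, and since u_1^(i)
   occurs in a level-(i+1) word only as its first block, N_i divides m.
   Finally, every finite subword of x lies in a concatenation of level-j words
   (go up to a level >= j, then cut into level-j blocks), so both occurrences
   x_[0,l_j) and x_[k,k+l_j) sit at multiples of l_j. *)

Lemma size_flatten_uniform (T : eqType) (ss : seq (seq T)) c :
  {in ss, forall s, size s = c} -> size (flatten ss) = size ss * c.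
Proof.
elim: ss => [|s ss IH] hss //=.
rewrite size_cat hss ?mem_head // IH // => t ht.
by apply: hss; rewrite inE ht orbT.
Qed.

Lemma take_drop_flatten_uniform (T : eqType) (ss : seq (seq T)) c q :
  {in ss, forall s, size s = c} -> q < size ss ->
  take c (drop (q * c) (flatten ss)) = nth [::] ss q.
Proof.
elim: ss q => [|s ss IH] [|q] hss //= hq.
  by rewrite drop0 take_size_cat ?hss ?mem_head.
rewrite mulSn drop_cat hss ?mem_head // ltnNge leq_addr /= addKn IH //.
by move=> t ht; apply: hss; rewrite inE ht orbT.
Qed.

Lemma infix_flatten (T : eqType) (w : seq T) ss : w \in ss -> infix w (flatten ss).
Proof.
elim: ss => [|s ss IH] //=; rewrite inE => /orP [/eqP ->|/IH].
  exact: prefix_infix.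
exact: infix_catl.
Qed.

Lemma subwordD x (a : int) n m :
  subword x a (n + m) = subword x a n ++ subword x (a + n%:Z)%R m.
Proof.
rewrite /subword iotaD map_cat; congr (_ ++ _).
rewrite add0n -[n]addn0 iotaDl -map_comp; apply: eq_map => i /=.
by rewrite addn0 PoszD GRing.addrA.
Qed.

Lemma size_subword x a n : size (subword x a n) = n.
Proof. by rewrite /subword size_map size_iota. Qed.

Lemma Pset1 N : ~ Pset N 1.
Proof. by case=> [|[i [hi [_ h1]]]] //; nia. Qed.

Lemma next_level_flatten u w : uniq u -> 0 < size u -> next_level u w ->
  exists2 ds, w = flatten ds & [/\ {subset ds <= u}, size ds = size u &
    forall m, m < size ds -> (nth [::] ds m == head [::] u) = (m == 0)].
Proof.
move=> u_uniq u_gt0 [pi [pi_fix ->]].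
exists [seq nth [::] u (pi i) | i <- enum 'I_(size u)] => //.
split; first by move=> c /mapP [i _ ->]; exact: mem_nth.
  by rewrite size_map size_enum_ord.
move=> m; rewrite size_map size_enum_ord => m_lt.
pose i0 := Ordinal u_gt0.
have pi_i0 : pi i0 = i0 by apply: pi_fix; exact: Pset1.
rewrite (nth_map i0) ?size_enum_ord // -nth0 nth_uniq ?ltn_ord //.
have -> : (val (pi (nth i0 (enum 'I_(size u)) m)) == 0) =
          (pi (nth i0 (enum 'I_(size u)) m) == pi i0) by rewrite pi_i0.
by rewrite (inj_eq perm_inj) -val_eqE /= nth_enum_ord.
Qed.

Section MarkerConstruction.

Variables (l1 : nat) (ord : nat -> seq (seq bool)).
Hypothesis mc : marker_construction l1 ord.

Local Notation l := (wlen l1 ord).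

Lemma wlenS i : 1 <= i -> l i.+1 = l i * size (ord i).
Proof. by case: i. Qed.

Lemma uniq_ord i : 1 <= i -> uniq (ord i).
Proof. by case: mc => _ [uniq1 [_ mcS]]; case: i => [|[|i]] // _; case: (mcS i.+1). Qed.

Lemma next_level_ord i w : 1 <= i -> w \in ord i.+1 -> next_level (ord i) w.
Proof. by case: mc => _ [_ [_ mcS]] /mcS [_ [/(_ w) [+ _] _]]. Qed.

Lemma head_ord i : 1 <= i -> head [::] (ord i.+1) = flatten (ord i).
Proof. by case: mc => _ [_ [_ mcS]] /mcS [_ []]. Qed.

Lemma level1_word w : w \in ord 1 ->
  [/\ size w = l1, take 3 w = [:: false; false; true] & only_prefix00 w].
Proof. by case: mc => _ [_ [lvl1 _]] /lvl1 [? [? ?]]. Qed.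

Lemma l1_ge3 : 3 <= l1.
Proof.
case: mc => [[s [_ size_ord1]] _].
have /level1_word [<- w001 _] : nth [::] (ord 1) 0 \in ord 1.
  by rewrite mem_nth // size_ord1 expn_gt0.
by have := congr1 size w001; rewrite size_take_min /=; lia.
Qed.

Lemma ord_shape i : 1 <= i ->
  [/\ 0 < size (ord i), 0 < l i & {in ord i, forall w, size w = l i}].
Proof.
elim: i => [|[|i] IH] // _.
  case: mc => [[s [_ ->]] _]; split; rewrite ?expn_gt0 //=; last first.
    by move=> w /level1_word [].
  by have := l1_ge3; lia.
have [ord_gt0 l_gt0 size_ord] := IH isT.
have i1_gt0 : 0 < i.+1 by [].
have size_ordS : {in ord i.+2, forall w, size w = l i.+2}.
  move=> w /(next_level_ord i1_gt0).
  move=> /(next_level_flatten (uniq_ord i1_gt0) ord_gt0).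
  move=> [ds -> [ds_sub size_ds _]].
  rewrite (size_flatten_uniform (c := l i.+1)) ?size_ds 1?mulnC //.
  by move=> d /ds_sub /size_ord.
split => //; last by rewrite wlenS // muln_gt0 l_gt0 ord_gt0.
case E : (ord i.+2) => [|a t] //.
have := congr1 size (head_ord i1_gt0); rewrite E (size_flatten_uniform size_ord).
by move=> h; have := muln_gt0 (size (ord i.+1)) (l i.+1); rewrite -h ord_gt0 l_gt0.
Qed.

Lemma size_ord_gt0 i : 1 <= i -> 0 < size (ord i).
Proof. by case/ord_shape. Qed.

Lemma wlen_gt0 i : 1 <= i -> 0 < l i.
Proof. by case/ord_shape. Qed.

Lemma size_mem_ord i : 1 <= i -> {in ord i, forall w, size w = l i}.
Proof. by case/ord_shape. Qed.

Lemma refine_blocks i cs : 1 <= i -> {subset cs <= ord i.+1} ->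
  exists D, [/\ flatten D = flatten cs, {subset D <= ord i},
    size D = size cs * size (ord i) &
    forall m, m < size D -> (nth [::] D m == head [::] (ord i)) = (size (ord i) %| m)].
Proof.
move=> i_gt0; elim: cs => [|c cs IH] cs_sub; first by exists [::]; split.
have [ds c_eq [ds_sub size_ds ds_head]] := next_level_flatten (uniq_ord i_gt0)
  (size_ord_gt0 i_gt0) (next_level_ord i_gt0 (cs_sub c (mem_head _ _))).
have [|D [D_eq D_sub size_D D_head]] := IH.
  by move=> d d_in; apply: cs_sub; rewrite inE d_in orbT.
exists (ds ++ D); split.
- by rewrite flatten_cat D_eq c_eq.
- by move=> d; rewrite mem_cat => /orP [/ds_sub|/D_sub].
- by rewrite size_cat size_ds size_D mulSn.
move=> m; rewrite size_cat nth_cat => m_lt; case: ltnP => m_ds.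
  rewrite ds_head //; case: m m_lt m_ds => [|m] _ m_ds; first by rewrite dvdn0.
  by rewrite gtnNdvd // -size_ds.
rewrite D_head; last by rewrite -(ltn_add2l (size ds)) subnKC.
by rewrite -{2}(subnK m_ds) size_ds dvdn_addl.
Qed.

Lemma marker001_dvd cs p : {subset cs <= ord 1} ->
  nth true (flatten cs) p = false -> nth true (flatten cs) p.+1 = false ->
  nth true (flatten cs) p.+2 = true -> l1 %| p.
Proof.
elim: cs p => [|c cs IH] p cs_sub //=.
have [size_c _ c_prefix00] := level1_word (cs_sub c (mem_head _ _)).
have cs_sub' : {subset cs <= ord 1} by move=> d d_in; apply: cs_sub; rewrite inE d_in orbT.
case: (ltnP p l1) => [p_lt|p_ge].
  case: (ltnP p.+1 l1) => [p1_lt|p1_ge].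
    rewrite !nth_cat size_c p_lt p1_lt => c_p c_p1 _.
    by rewrite (c_prefix00 p) ?size_c.
  have -> : p.+1 = l1 by lia.
  rewrite !nth_cat size_c p_lt ltnn ltnNge leqnSn subnn subSnn /=.
  case: cs {IH cs_sub} cs_sub' => [|c' cs] // cs_sub' _ c'_0.
  have [size_c' c'_001 _] := level1_word (cs_sub' c' (mem_head _ _)).
  rewrite nth_cat size_c' (leq_ltn_trans _ l1_ge3) //.
  by have := congr1 (nth true ^~ 1) c'_001; rewrite nth_take //= => ->.
have [q ->] : exists q, p = q + l1 by exists (p - l1); rewrite subnK.
rewrite -!addSn !nth_cat size_c ![_ + l1 < l1]ltnNge !leq_addl !addnK /=.
by move=> c_q c_q1 c_q2; rewrite dvdn_addr // (IH q cs_sub').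
Qed.

Lemma take_wlen_ord_succ i v : 1 <= i -> v \in ord i.+1 ->
  take (l i) v = head [::] (ord i).
Proof.
move=> i_gt0 /(next_level_ord i_gt0).
move=> /(next_level_flatten (uniq_ord i_gt0) (size_ord_gt0 i_gt0)).
move=> [[|d ds] -> [ds_sub size_ds ds_head]].
  by have := size_ord_gt0 i_gt0; rewrite -size_ds.
have := ds_head 0 (ltn0Sn _); rewrite eqxx => /eqP <-.
by rewrite /= take_size_cat // (size_mem_ord i_gt0) // ds_sub ?mem_head.
Qed.

Lemma occurrence_wlen_dvd i cs p : 1 <= i -> {subset cs <= ord i} ->
  take (l i) (drop p (flatten cs)) \in ord i -> l i %| p.
Proof.
elim: i cs p => [//|[|i] IH] cs p _ cs_sub.
  move=> /level1_word [_ + _]; rewrite take_takel ?l1_ge3 // => v001.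
  have nth_at n : n < 3 -> nth true (flatten cs) (p + n) = nth true [:: false; false; true] n.
    by move=> n_lt; rewrite -v001 nth_take // nth_drop.
  apply: (marker001_dvd cs_sub); [rewrite -[p]addn0 | rewrite -addn1 | rewrite -addn2];
    exact: nth_at.
have i1_gt0 : 0 < i.+1 by [].
move=> v_in; have [D [D_eq D_sub _ D_head]] := refine_blocks i1_gt0 cs_sub.
rewrite -D_eq in v_in.
have size_D : {in D, forall s, size s = l i.+1} by move=> s /D_sub; exact: size_mem_ord.
have first_block : take (l i.+1) (drop p (flatten D)) = head [::] (ord i.+1).
  rewrite -(take_wlen_ord_succ i1_gt0 v_in) take_takel //.
  by rewrite (wlenS i1_gt0) leq_pmulr // size_ord_gt0.
have head_in : head [::] (ord i.+1) \in ord i.+1.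
  by rewrite -nth0 mem_nth // size_ord_gt0.
have /dvdnP [m p_eq] : l i.+1 %| p by apply: (IH _ _ _ D_sub); rewrite ?first_block.
have m_lt : m < size D.
  rewrite ltnNge; apply/negP => m_ge; move: first_block.
  rewrite p_eq drop_oversize ?(size_flatten_uniform size_D) ?leq_mul2r ?m_ge ?orbT //.
  move/(congr1 size); rewrite (size_mem_ord i1_gt0 head_in) => size0.
  by have := wlen_gt0 i1_gt0; rewrite -size0.
have := D_head m m_lt; rewrite -(take_drop_flatten_uniform size_D m_lt) -p_eq first_block eqxx.
move=> /esym /dvdnP [k m_eq].
by rewrite p_eq m_eq (wlenS i1_gt0) -mulnA [size _ * _]mulnC dvdn_mull.
Qed.

Lemma mem_ord_infix_up i k w : 1 <= i -> w \in ord i ->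
  exists2 w', w' \in ord (k + i) & infix w w'.
Proof.
move=> i_gt0 w_in; elim: k => [|k [w' w'_in w_w']]; first by exists w; rewrite ?infix_refl.
have ki_gt0 : 0 < k + i by rewrite addn_gt0 i_gt0 orbT.
exists (head [::] (ord (k + i).+1)); first by rewrite -nth0 mem_nth // size_ord_gt0.
by rewrite (head_ord ki_gt0); apply: infix_trans w_w' _; exact: infix_flatten.
Qed.

Lemma flatten_ord_down j k cs : 1 <= j -> {subset cs <= ord (k + j)} ->
  exists2 es, {subset es <= ord j} & flatten es = flatten cs.
Proof.
move=> j_gt0; elim: k cs => [|k IH] cs cs_sub; first by exists cs.
have kj_gt0 : 0 < k + j by rewrite addn_gt0 j_gt0 orbT.
have [D [D_eq D_sub _ _]] := refine_blocks kj_gt0 cs_sub.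
by have [es es_sub es_eq] := IH D D_sub; exists es; rewrite ?es_eq.
Qed.

Lemma infix_flatten_ord j n v w : 1 <= j -> 1 <= n -> w \in ord n -> infix v w ->
  exists2 es, {subset es <= ord j} & infix v (flatten es).
Proof.
move=> j_gt0 n_gt0 w_in v_w.
have [w' w'_in w_w'] := mem_ord_infix_up j n_gt0 w_in.
have w'_sub : {subset [:: w'] <= ord (n + j)}.
  by move=> d; rewrite mem_seq1 addnC => /eqP ->.
have [es es_sub es_eq] := flatten_ord_down j_gt0 w'_sub.
by exists es; rewrite // es_eq /= cats0; exact: infix_trans w_w'.
Qed.

End MarkerConstruction.

Theorem lemma4p1 :
  exists L : nat, forall (l1 : nat) (ord : nat -> seq (seq bool)),
    L <= l1 -> marker_construction l1 ord ->
    forall (j : nat), 1 <= j ->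
    forall x : int -> bool, in_X ord x ->
      subword x 0 (wlen l1 ord j) \in ord j ->
      forall k : nat, 0 < k ->
        subword x k%:Z (wlen l1 ord j) = subword x 0 (wlen l1 ord j) ->
        wlen l1 ord j %| k.
Proof.
exists 0 => l1 ord _ mc j j_gt0 x x_in x0_in k _ xk_eq.
set n := wlen l1 ord j in x0_in xk_eq *.
have [i [i_gt0 [w [w_in seg_w]]]] := x_in 0%R (k + n).
have [es es_sub /infixP [s [s' es_eq]]] := infix_flatten_ord mc j_gt0 i_gt0 w_in seg_w.
have at_0 : take n (drop (size s) (flatten es)) = subword x 0 n.
  rewrite es_eq drop_size_cat // addnC subwordD -catA take_size_cat //.
  exact: size_subword.
have at_k : take n (drop (k + size s) (flatten es)) = subword x 0 n.
  rewrite -drop_drop es_eq drop_size_cat // subwordD GRing.add0r -catA.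
  by rewrite drop_size_cat ?size_subword // take_size_cat ?size_subword.
have dvd_s : n %| size s by apply: (occurrence_wlen_dvd mc j_gt0 es_sub); rewrite at_0.
have dvd_ks : n %| k + size s by apply: (occurrence_wlen_dvd mc j_gt0 es_sub); rewrite at_k.
by rewrite -(dvdn_addl k dvd_s).
Qed.
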